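(* Let $f$, $g$, $\xi$, $F$ satisfy the standing assumptions below, and let $x$ be the unique continuous solution of $x'(t)=-f(x(t))+g(t)$, $t>0$, $x(0)=\xi$. Suppose that \[ \lim_{t\to\infty}\frac{g(t)}{f(F^{-1}(t))}=+\infty, \] that $f\in\mathrm{RV}_0(\beta)$ for some $\beta>1$, that $g\in\mathrm{RV}_\infty(-\theta)$ for some $\theta\ge0$, and that $x(t)\to0$ as $t\to\infty$. (i) If $\theta>0$, then $\lim_{t\to\infty}f(x(t))/g(t)=1$. (ii) If $\theta=0$ and there is a decreasing function $\gamma_1$ with $\lim_{t\to\infty}g(t)/\gamma_1(t)=1$, then $\lim_{t\to\infty}f(x(t))/g(t)=1$.
   Context: Standing assumptions: $f\in C(\mathbb{R};\mathbb{R})$ is locally Lipschitz continuous on $\mathbb{R}$, $f(0)=0$ and $xf(x)>0$ for $x\neq0$; $g\in C([0,\infty);\mathbb{R})$ with $g(t)>0$ for $t>0$; $\xi>0$. $F(x)=\int_x^1 \frac{du}{f(u)}$ for $x>0$, with $\lim_{x\to0^+}F(x)=+\infty$; $F^{-1}$ is the inverse of the strictly decreasing function $F$. $\mathrm{RV}_0(\beta)$: measurable positive $\varphi$ on $(0,\infty)$ with $\varphi(\lambda x)/\varphi(x)\to\lambda^\beta$ as $x\to0^+$ for every $\lambda>0$. $\mathrm{RV}_\infty(\alpha)$: measurable positive $h$ with $h(\lambda t)/h(t)\to\lambda^\alpha$ as $t\to\infty$ for every $\lambda>0$. *)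

From Stdlib Require Import Reals.
Open Scope R_scope.

Definition locally_lipschitz (f : R -> R) : Prop :=
  forall a b : R, exists L : R, 0 <= L /\
    forall x y : R, a <= x <= b -> a <= y <= b -> Rabs (f x - f y) <= L * Rabs (x - y).

Definition continuous_on_nonneg (g : R -> R) : Prop :=
  forall t : R, 0 <= t -> limit1_in g (fun u => 0 <= u) (g t) t.

Definition lim_infty (h : R -> R) (l : R) : Prop :=
  forall eps : R, eps > 0 -> exists T : R, forall t : R, t > T -> Rabs (h t - l) < eps.

Definition lim_infty_pinf (h : R -> R) : Prop :=
  forall M : R, exists T : R, forall t : R, t > T -> h t > M.

Definition lim_0plus (h : R -> R) (l : R) : Prop :=
  forall eps : R, eps > 0 -> exists d : R, d > 0 /\
    forall x : R, 0 < x < d -> Rabs (h x - l) < eps.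

Definition lim_0plus_pinf (h : R -> R) : Prop :=
  forall M : R, exists d : R, d > 0 /\ forall x : R, 0 < x < d -> h x > M.

Definition RV0 (phi : R -> R) (beta : R) : Prop :=
  (forall x : R, x > 0 -> phi x > 0) /\
  forall lam : R, lam > 0 ->
    lim_0plus (fun x => phi (lam * x) / phi x) (Rpower lam beta).

Definition RVinf (h : R -> R) (alpha : R) : Prop :=
  (forall t : R, t > 0 -> h t > 0) /\
  forall lam : R, lam > 0 ->
    lim_infty (fun t => h (lam * t) / h t) (Rpower lam alpha).

(* Both parts of the theorem follow from one statement (solution_ratio_limit):
   if f is almost increasing at 0+ and g is almost decreasing at +oo (their ratios over
   nearby arguments are at most 1 + eps in the "wrong" direction), then f(x(t)) / g(t) -> 1.
   - Karamata's uniform convergence theorem, proved here through the Baire category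
     theorem on an interval, shows that a continuous f in RV_0(beta), beta > 0, is almost
     increasing at 0+ (RV0_almost_increasing).
   - g is almost decreasing at +oo: in case (i) by the same theorem applied to u |-> g(1/u),
     which lies in RV_0(theta); in case (ii) because g is asymptotic to a nonincreasing gamma1.
   - The solution stays positive (solution_positive).  For the lower bound, at a time r
     where f(x(r)) < (1 - e) g(r), go back to the last time q where f(x(q)) >= (1 - e/2) g(q);
     x increased on [q, r], contradicting near-monotonicity.  For the upper bound, an
     overshoot at r forces f(x) > (1 + e/4) g on an interval (q, r] with q <= r / L, along
     which F(x) grows linearly; hence x(r) <= F^{-1}(k r), and the growth hypothesis
     g / f(F^{-1}) -> +oo makes f(x(r)) small compared to g(r).
   The file proceeds from elementary real-analysis facts and the Baire theorem, through
   uniform convergence for regular variation and the near-monotonicity of g, to the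
   positivity of the solution, the properties of F, and the two bounds on f(x) / g. *)

From Stdlib Require Import Reals Lra Lia ClassicalEpsilon.
Open Scope R_scope.

Lemma Rabs_le_between (a b : R) : Rabs a <= b -> - b <= a <= b.
Proof. unfold Rabs; destruct (Rcase_abs a); lra. Qed.

Lemma inv_nat_small (d : R) : d > 0 -> exists n : nat, / (INR n + 1) < d.
Proof.
  intro Hd. destruct (INR_unbounded (/ d)) as [n Hn]. exists n.
  rewrite <- (Rinv_inv d). apply Rinv_lt_contravar; [|lra].
  apply Rmult_lt_0_compat; [apply Rinv_0_lt_compat; lra | pose proof (pos_INR n); lra].
Qed.

Lemma continuity_pt_eps (h : R -> R) (s : R) : continuity_pt h s ->
  forall e, e > 0 -> exists d, d > 0 /\ forall u, Rabs (u - s) < d -> Rabs (h u - h s) < e.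
Proof.
  intros H e He. destruct (H e He) as [d [Hd Hu]]. exists d; split; [exact Hd|].
  intros u Hus. destruct (Req_dec s u) as [<-|E].
  - rewrite Rminus_diag, Rabs_R0. exact He.
  - apply (Hu u). split; [split; [exact I | exact E] | exact Hus].
Qed.

Lemma continuity_pt_limit1_in (h : R -> R) (D : R -> Prop) (s : R) :
  continuity_pt h s -> limit1_in h D (h s) s.
Proof.
  intros Hc e He. destruct (continuity_pt_eps h s Hc e He) as [d [Hd Hnear]].
  exists d. split; [exact Hd|]. intros u [_ Hu]. apply Hnear. exact Hu.
Qed.

Lemma mvt_lower_bound (h d : R -> R) (a b c : R) : a < b ->
  (forall s, a <= s <= b -> derivable_pt_lim h s (d s)) ->
  (forall s, a < s < b -> c < d s) -> c * (b - a) < h b - h a.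
Proof.
  intros Hab Hder Hd. destruct (MVT_cor2 h d a b Hab Hder) as [s [Hmvt Hs]].
  rewrite Hmvt. apply Rmult_lt_compat_r; [lra | apply Hd; exact Hs].
Qed.

Lemma mvt_upper_bound (h d : R -> R) (a b c : R) : a < b ->
  (forall s, a <= s <= b -> derivable_pt_lim h s (d s)) ->
  (forall s, a < s < b -> d s < c) -> h b - h a < c * (b - a).
Proof.
  intros Hab Hder Hd. destruct (MVT_cor2 h d a b Hab Hder) as [s [Hmvt Hs]].
  rewrite Hmvt. apply Rmult_lt_compat_r; [lra | apply Hd; exact Hs].
Qed.

Lemma grid_point (y0 s y : R) (N : nat) : s > 0 -> y0 <= y <= y0 + INR N * s ->
  exists j, (j <= N)%nat /\ y <= y0 + INR j * s <= y + s.
Proof.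
  intro Hs. induction N as [|N IH]; intro Hy.
  - exists O. simpl in *. split; [lia|lra].
  - rewrite S_INR in Hy. destruct (Rle_dec y (y0 + INR N * s)) as [L|L].
    + destruct (IH ltac:(lra)) as [j [Hj Hjy]]. exists j. split; [lia|exact Hjy].
    + exists (S N). rewrite S_INR. split; [lia|lra].
Qed.

Lemma scale_as_grid_quotient (c r l : R) (N : nat) : r > 0 -> 1 <= c - r ->
  (c - r) / 2 <= INR N * r -> 1/2 <= l <= 1 ->
  exists j m, (j <= N)%nat /\ c - r <= m <= c + r /\ l * m = (c - r) / 2 + INR j * r.
Proof.
  intros Hr Hc HN Hl.
  destruct (grid_point ((c - r) / 2) r (l * (c - r)) N Hr) as [j [Hj Hmu]]; [nra|].
  exists j, (((c - r) / 2 + INR j * r) / l). split; [exact Hj|]. split.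
  - split; apply (Rmult_le_reg_r l); try lra;
      replace (((c - r) / 2 + INR j * r) / l * l) with ((c - r) / 2 + INR j * r)
        by (field; lra); nra.
  - field. lra.
Qed.

Lemma Rpower_ge_1 (m b : R) : 1 <= m -> 0 <= b -> 1 <= Rpower m b.
Proof.
  intros Hm Hb. rewrite <- (Rpower_O m) by lra. apply Rle_Rpower; lra.
Qed.

Definition eventually (P : R -> Prop) : Prop := exists T, forall t, t > T -> P t.

Lemma eventually_and (P Q : R -> Prop) :
  eventually P -> eventually Q -> eventually (fun t => P t /\ Q t).
Proof.
  intros [T1 H1] [T2 H2]. exists (Rmax T1 T2). intros t Ht.
  pose proof (Rmax_l T1 T2). pose proof (Rmax_r T1 T2).
  split; [apply H1 | apply H2]; lra.
Qed.

Lemma eventually_gt (c : R) : eventually (fun t => c < t).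
Proof. exists c. intros t Ht. exact Ht. Qed.

Lemma eventually_scale (k : R) (P : R -> Prop) :
  k > 0 -> eventually P -> eventually (fun t => P (k * t)).
Proof.
  intros Hk [T HT]. exists (T / k). intros t Ht. apply HT.
  replace T with (k * (T / k)) by (field; lra). apply Rmult_lt_compat_l; lra.
Qed.

Lemma nested_intervals (p q : nat -> R) :
  (forall n, p n <= p (S n)) -> (forall n, q (S n) <= q n) -> (forall n, p n <= q n) ->
  exists l, forall n, p n <= l <= q n.
Proof.
  intros Hp Hq Hpq.
  assert (Hmono : forall n k, (n <= k)%nat -> p n <= p k /\ q k <= q n).
  { intros n k Hnk. induction Hnk as [|k _ IH]; [lra|].
    specialize (Hp k). specialize (Hq k). lra. }
  assert (Hcross : forall n k, p n <= q k).
  { intros n k. destruct (Nat.le_ge_cases n k) as [L|L];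
      destruct (Hmono _ _ L); pose proof (Hpq k); pose proof (Hpq n); lra. }
  destruct (completeness (fun y => exists n, y = p n)) as [l [Hub Hlub]].
  - exists (q O). intros y [n ->]. apply Hcross.
  - exists (p O), O. reflexivity.
  - exists l. intro n. split.
    + apply Hub. exists n. reflexivity.
    + apply Hlub. intros y [k ->]. apply Hcross.
Qed.

Section Baire.
Variables (a b : R) (P : nat -> R -> Prop).
Hypothesis a_lt_b : a < b.
Hypothesis P_closed : forall n l, a <= l <= b -> ~ P n l ->
  exists d, d > 0 /\ forall m, Rabs (m - l) < d -> ~ P n m.
Hypothesis P_cover : forall l, a <= l <= b -> exists n, P n l.

Lemma shrink_avoiding
  (nowhere_dense : forall n c r, r > 0 -> a <= c - r -> c + r <= b ->
     ~ (forall m, Rabs (m - c) <= r -> P n m)) :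
  forall n p q, a <= p < q -> q <= b ->
  exists p' q', p <= p' < q' /\ q' <= q /\ forall m, p' <= m <= q' -> ~ P n m.
Proof.
  intros n p q Hpq Hqb.
  destruct (not_all_ex_not _ _
    (nowhere_dense n ((p + q) / 2) ((q - p) / 4) ltac:(lra) ltac:(lra) ltac:(lra)))
    as [m Hm].
  apply imply_to_and in Hm. destruct Hm as [Hmc HnP]. apply Rabs_le_between in Hmc.
  destruct (P_closed n m ltac:(lra) HnP) as [d [Hd Hball]].
  set (w := Rmin (d / 2) ((q - p) / 4)).
  assert (Hw : 0 < w <= d / 2 /\ w <= (q - p) / 4).
  { unfold w. split; [split|]; [apply Rmin_pos; lra | apply Rmin_l | apply Rmin_r]. }
  exists (m - w), (m + w). split; [lra | split; [lra|]].
  intros m' Hm'. apply Hball. apply Rabs_def1; lra.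
Qed.

Theorem baire_interval :
  exists n c r, r > 0 /\ a <= c - r /\ c + r <= b /\ forall m, Rabs (m - c) <= r -> P n m.
Proof.
  apply NNPP; intro Hno.
  assert (nowhere_dense : forall n c r, r > 0 -> a <= c - r -> c + r <= b ->
            ~ (forall m, Rabs (m - c) <= r -> P n m)).
  { intros n c r Hr Hac Hcb Hall. apply Hno. exists n, c, r. auto. }
  (* A choice function performing one shrinking step at stage [n]. *)
  destruct (choice (fun (nI : nat * (R * R)) (J : R * R) =>
      a <= fst (snd nI) < snd (snd nI) -> snd (snd nI) <= b ->
      fst (snd nI) <= fst J < snd J /\ snd J <= snd (snd nI) /\
      forall m, fst J <= m <= snd J -> ~ P (fst nI) m)) as [step Hstep].
  { intros [n [p q]]. simpl.
    destruct (classic (a <= p < q /\ q <= b)) as [[H1 H2]|Hbad].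
    - destruct (shrink_avoiding nowhere_dense n p q H1 H2) as [p' [q' HJ]].
      exists (p', q'). intros _ _. exact HJ.
    - exists (0, 0). intros H1 H2. tauto. }
  pose (I := fix I (n : nat) : R * R :=
          match n with O => (a, b) | S k => step (k, I k) end).
  assert (HI : forall n, a <= fst (I n) < snd (I n) /\ snd (I n) <= b /\
                 fst (I n) <= fst (I (S n)) < snd (I (S n)) /\ snd (I (S n)) <= snd (I n) /\
                 forall m, fst (I (S n)) <= m <= snd (I (S n)) -> ~ P n m).
  { induction n as [|n IH].
    - destruct (Hstep (O, (a, b))) as [H1 [H2 H3]]; cbn [fst snd] in *; try lra.
      change (I 1%nat) with (step (O, (a, b))). cbn [fst snd I].
      refine (conj _ (conj _ (conj _ (conj _ H3)))); lra.
    - destruct IH as [H0 [Hb [H1 [H2 _]]]].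
      destruct (Hstep (S n, I (S n))) as [J1 [J2 J3]]; cbn [fst snd] in *; try lra.
      change (I (S (S n))) with (step (S n, I (S n))).
      refine (conj _ (conj _ (conj _ (conj _ J3)))); lra. }
  destruct (nested_intervals (fun n => fst (I n)) (fun n => snd (I n))) as [l Hl].
  - intro n. apply HI.
  - intro n. apply HI.
  - intro n. destruct (HI n) as [H1 _]. lra.
  - destruct (P_cover l) as [n Hn].
    + destruct (Hl O). simpl in *. lra.
    + destruct (HI n) as [_ [_ [_ [_ Havoid]]]]. exact (Havoid l (Hl (S n)) Hn).
Qed.

End Baire.

Definition almost_increasing_at_0 (phi : R -> R) : Prop :=
  forall eps, eps > 0 -> exists eta, eta > 0 /\
    forall v u, 0 < v <= u -> u < eta -> phi v <= (1 + eps) * phi u.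

(* Karamata's uniform convergence theorem, in the one-sided form needed here: a continuous
   function regularly varying at 0+ with positive index is almost increasing at 0+. *)
Section RegularVariationAtZero.
Variables (phi : R -> R) (b : R).
Hypothesis phi_RV : RV0 phi b.
Hypothesis phi_cont : forall u, u > 0 -> continuity_pt phi u.

Lemma RV0_pos (u : R) : u > 0 -> phi u > 0.
Proof. exact (proj1 phi_RV u). Qed.

Lemma ratio_deviation_continuous (u l : R) : u > 0 -> l > 0 ->
  continuity_pt (fun m => phi (m * u) / phi u - Rpower m b) l.
Proof.
  intros Hu Hl.
  apply (continuity_pt_minus (fun m => phi (m * u) / phi u) (fun m => Rpower m b)).
  - apply (continuity_pt_div (fun m => phi (m * u)) (fun _ => phi u)).
    + apply (continuity_pt_comp (fun m => m * u) phi).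
      * apply (continuity_pt_mult (fun m => m) (fun _ => u));
          [apply derivable_continuous_pt, derivable_pt_id | apply continuity_pt_const; now intros].
      * apply phi_cont, Rmult_lt_0_compat; lra.
    + apply continuity_pt_const; now intros.
    + pose proof (RV0_pos u Hu). lra.
  - apply derivable_continuous_pt. exists (b * Rpower l (b - 1)).
    apply derivable_pt_lim_power. exact Hl.
Qed.

(* Baire's theorem turns pointwise convergence into uniform convergence on some
   subinterval of [1, 2]. *)
Lemma RV0_uniform_on_subinterval (e : R) : e > 0 ->
  exists c r eta, r > 0 /\ 1 <= c - r /\ c + r <= 2 /\ eta > 0 /\
    forall m, Rabs (m - c) <= r -> forall u, 0 < u < eta ->
      Rabs (phi (m * u) / phi u - Rpower m b) <= e.
Proof.
  intro He.
  destruct (baire_interval 1 2 (fun n m => forall u, 0 < u < / (INR n + 1) ->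
              Rabs (phi (m * u) / phi u - Rpower m b) <= e))
    as [n [c [r [Hr [H1 [H2 Hunif]]]]]].
  - lra.
  - intros n l Hl HnP. apply not_all_ex_not in HnP. destruct HnP as [u Hu].
    apply imply_to_and in Hu. destruct Hu as [Hu Hfar]. apply Rnot_le_lt in Hfar.
    destruct (continuity_pt_eps _ _ (ratio_deviation_continuous u l ltac:(lra) ltac:(lra))
                (Rabs (phi (l * u) / phi u - Rpower l b) - e) ltac:(lra)) as [d [Hd Hnear]].
    exists d. split; [exact Hd|]. intros m Hm Hall.
    specialize (Hnear m Hm). specialize (Hall u Hu). cbv beta in Hnear.
    pose proof (Rabs_triang_inv (phi (l * u) / phi u - Rpower l b)
                                (phi (m * u) / phi u - Rpower m b)).
    rewrite Rabs_minus_sym in Hnear. lra.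
  - intros l Hl. destruct (proj2 phi_RV l ltac:(lra) e He) as [d [Hd Hlim]].
    destruct (inv_nat_small d Hd) as [n Hn]. exists n. intros u Hu.
    left. apply Hlim. lra.
  - exists c, r, (/ (INR n + 1)).
    refine (conj Hr (conj H1 (conj H2 (conj _ Hunif)))).
    apply Rinv_0_lt_compat. pose proof (pos_INR n). lra.
Qed.

Lemma RV0_uniform_finite (mu : nat -> R) (e : R) : e > 0 -> (forall j, mu j > 0) ->
  forall N, exists eta, eta > 0 /\ forall j u, (j <= N)%nat -> 0 < u < eta ->
    Rabs (phi (mu j * u) / phi u - Rpower (mu j) b) <= e.
Proof.
  intros He Hmu. induction N as [|N [eta [Heta IH]]].
  - destruct (proj2 phi_RV (mu O) (Hmu O) e He) as [d [Hd Hlim]].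
    exists d. split; [exact Hd|]. intros j u Hj Hu.
    replace j with O by lia. left. apply Hlim. exact Hu.
  - destruct (proj2 phi_RV (mu (S N)) (Hmu (S N)) e He) as [d [Hd Hlim]].
    exists (Rmin eta d). split; [apply Rmin_pos; assumption|].
    intros j u Hj Hu. pose proof (Rmin_l eta d). pose proof (Rmin_r eta d).
    destruct (Nat.eq_dec j (S N)) as [->|Hne].
    + left. apply Hlim. lra.
    + apply IH; [lia|lra].
Qed.

(* Uniformity over the scale range [1/2, 1]: writing [l = mu_j / m] with [m] in the
   Baire subinterval and [mu_j] on a finite grid, [phi (l u) / phi u] is a quotient of
   ratios controlled by the two lemmas above, and it is at most
   [(m^b + e) / (m^b - e) <= 1 + eps] since [mu_j^b <= m^b] and [m^b >= 1]. *)
Lemma RV0_half_scale (eps : R) : b >= 0 -> eps > 0 -> exists eta, eta > 0 /\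
  forall l u, 1/2 <= l <= 1 -> 0 < u < eta -> phi (l * u) <= (1 + eps) * phi u.
Proof.
  intros Hb Heps. set (e := eps / (2 + eps)).
  assert (He : e > 0) by (unfold e; apply Rdiv_lt_0_compat; lra).
  assert (He2 : e * (2 + eps) = eps) by (unfold e; field; lra).
  destruct (RV0_uniform_on_subinterval e He) as [c [r [eta1 [Hr [Hc1 [_ [Heta1 Hunif]]]]]]].
  set (mu := fun j : nat => (c - r) / 2 + INR j * r).
  assert (Hmu : forall j, mu j > 0) by (intro j; unfold mu; pose proof (pos_INR j); nra).
  destruct (INR_unbounded ((c - r) / (2 * r))) as [N HN].
  destruct (RV0_uniform_finite mu e He Hmu N) as [eta2 [Heta2 Hgrid]].
  exists (Rmin eta1 eta2). split; [apply Rmin_pos; assumption|].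
  intros l u Hl Hu. pose proof (Rmin_l eta1 eta2). pose proof (Rmin_r eta1 eta2).
  destruct (scale_as_grid_quotient c r l N Hr Hc1) as [j [m [Hj [Hm Hlm]]]]; [|exact Hl|].
  { replace ((c - r) / 2) with ((c - r) / (2 * r) * r) by (field; lra).
    apply Rmult_le_compat_r; lra. }
  fold (mu j) in Hlm. pose proof (Hmu j).
  (* [l u = mu_j w] and [u = m w] with [w = u / m <= u] *)
  set (w := u / m).
  assert (Hw : 0 < w <= u).
  { unfold w. split; [apply Rdiv_lt_0_compat; lra|].
    apply (Rmult_le_reg_r m); [lra|]. replace (u / m * m) with u by (field; lra). nra. }
  assert (Hup := Hgrid j w Hj ltac:(lra)).
  replace (mu j * w) with (l * u) in Hup by (unfold w; rewrite <- Hlm; field; lra).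
  assert (Hlow := Hunif m ltac:(apply Rabs_le; lra) w ltac:(lra)).
  replace (m * w) with u in Hlow by (unfold w; field; lra).
  apply Rabs_le_between in Hup. apply Rabs_le_between in Hlow.
  assert (Hmb : 1 <= Rpower m b) by (apply Rpower_ge_1; lra).
  assert (Hmub : Rpower (mu j) b <= Rpower m b)
    by (apply Rle_Rpower_l; [lra | rewrite <- Hlm; split; nra]).
  pose proof (RV0_pos w ltac:(lra)). pose proof (RV0_pos u ltac:(lra)).
  assert (Hnum : phi (l * u) <= (Rpower m b + e) * phi w).
  { replace (phi (l * u)) with (phi (l * u) / phi w * phi w) by (field; lra). nra. }
  assert (Hden : (Rpower m b - e) * phi w <= phi u).
  { replace (phi u) with (phi u / phi w * phi w) by (field; lra). nra. }
  assert (Hcoef : Rpower m b + e <= (1 + eps) * (Rpower m b - e)) by nra.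
  nra.
Qed.

(* Chaining the scale range [1/2, 1] with the halving inequality [phi (u/2) <= phi u]
   (a consequence of [(1/2)^b < 1]) covers every ratio [v/u <= 1]. *)
Lemma RV0_almost_increasing : b > 0 -> almost_increasing_at_0 phi.
Proof.
  intros Hb eps Heps.
  destruct (RV0_half_scale eps ltac:(lra) Heps) as [eta1 [Heta1 Hscale]].
  assert (Hhalf_b : Rpower (1/2) b < 1).
  { replace 1 with (Rpower 1 b) at 2
      by (unfold Rpower; rewrite ln_1, Rmult_0_r; apply exp_0).
    apply Rlt_Rpower_l; lra. }
  destruct (proj2 phi_RV (1/2) ltac:(lra) (1 - Rpower (1/2) b) ltac:(lra))
    as [eta2 [Heta2 Hlim]].
  set (eta := Rmin eta1 eta2).
  assert (Heta : 0 < eta <= eta1 /\ eta <= eta2).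
  { unfold eta. split; [split|]; [apply Rmin_pos; lra | apply Rmin_l | apply Rmin_r]. }
  assert (Hhalving : forall u, 0 < u < eta -> phi (1/2 * u) <= phi u).
  { intros u Hu. specialize (Hlim u ltac:(lra)). apply Rabs_def2 in Hlim.
    pose proof (RV0_pos u ltac:(lra)).
    replace (phi (1/2 * u)) with (phi (1/2 * u) / phi u * phi u) by (field; lra). nra. }
  assert (Hchain : forall n u v, 0 < u < eta -> u / 2 ^ n <= v <= u ->
                     phi v <= (1 + eps) * phi u).
  { induction n as [|n IH]; intros u v Hu Hv.
    - replace v with u by (simpl in Hv; lra). pose proof (RV0_pos u ltac:(lra)). nra.
    - assert (H2n : 2 ^ n > 0) by (apply pow_lt; lra).
      destruct (Rle_dec (u / 2) v) as [L|L].
      + replace v with ((v / u) * u) by (field; lra). apply Hscale; [|lra].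
        split; apply (Rmult_le_reg_r u); try lra;
          replace (v / u * u) with v by (field; lra); lra.
      + apply Rle_trans with ((1 + eps) * phi (1/2 * u)).
        * apply IH; [lra|]. simpl in Hv.
          replace (1/2 * u / 2 ^ n) with (u / (2 * 2 ^ n)) by (field; lra). lra.
        * apply Rmult_le_compat_l; [lra|]. apply Hhalving. lra. }
  exists eta. split; [lra|]. intros v u Hv Hu.
  destruct (Pow_x_infinity 2 ltac:(rewrite Rabs_pos_eq; lra) (u / v)) as [n Hn].
  specialize (Hn n (Nat.le_refl n)). rewrite Rabs_pos_eq in Hn by (apply pow_le; lra).
  assert (H2n : 2 ^ n > 0) by (apply pow_lt; lra).
  apply (Hchain n u v); [lra|]. split; [|lra].
  apply (Rmult_le_reg_r (2 ^ n)); [lra|].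
  replace (u / 2 ^ n * 2 ^ n) with u by (field; lra).
  assert (u / v * v = u) by (field; lra). nra.
Qed.

End RegularVariationAtZero.

Definition almost_decreasing_at_infty (h : R -> R) : Prop :=
  forall eps, eps > 0 -> eventually (fun t => forall s, t <= s -> h s <= (1 + eps) * h t).

Lemma continuous_on_nonneg_pt (g : R -> R) : continuous_on_nonneg g ->
  forall s, s > 0 -> continuity_pt g s.
Proof.
  intros Hg s Hs eps Heps. destruct (Hg s ltac:(lra) eps Heps) as [d [Hd Hnear]].
  exists (Rmin d s). split; [apply Rmin_pos; lra|].
  intros u [_ Hu]. simpl in *. unfold R_dist in *.
  pose proof (Rmin_l d s). pose proof (Rmin_r d s). apply Rabs_def2 in Hu.
  apply Hnear. split; [lra|]. apply Rabs_def1; lra.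
Qed.

Lemma RVinf_reflect (g : R -> R) (theta : R) :
  RVinf g (- theta) -> RV0 (fun u => g (/ u)) theta.
Proof.
  intros [Hpos Hlim]. split.
  - intros u Hu. apply Hpos, Rinv_0_lt_compat. lra.
  - intros l Hl e He. destruct (Hlim (/ l) (Rinv_0_lt_compat l Hl) e He) as [T HT].
    pose proof (Rmax_l T 1). pose proof (Rmax_r T 1). set (T1 := Rmax T 1) in *.
    exists (/ T1). split; [apply Rinv_0_lt_compat; lra|].
    intros u Hu. rewrite Rinv_mult.
    replace (Rpower l theta) with (Rpower (/ l) (- theta))
      by (unfold Rpower; rewrite ln_Rinv by lra; f_equal; ring).
    apply HT. apply Rle_lt_trans with T1; [lra|].
    rewrite <- (Rinv_inv T1). apply Rinv_lt_contravar; [apply Rmult_lt_0_compat|]; lra.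
Qed.

(* Case (i): for [theta > 0], uniform convergence for the reflected function. *)
Lemma RVinf_almost_decreasing (g : R -> R) (theta : R) :
  theta > 0 -> RVinf g (- theta) -> (forall s, s > 0 -> continuity_pt g s) ->
  almost_decreasing_at_infty g.
Proof.
  intros Hth HRV Hcont eps Heps.
  assert (Hcont_reflect : forall u, u > 0 -> continuity_pt (fun u => g (/ u)) u).
  { intros u Hu. apply (continuity_pt_comp (fun u => / u) g).
    - apply (continuity_pt_inv (fun u => u)); [|lra].
      apply derivable_continuous_pt, derivable_pt_id.
    - apply Hcont, Rinv_0_lt_compat. lra. }
  destruct (RV0_almost_increasing _ _ (RVinf_reflect g theta HRV) Hcont_reflect Hth eps Heps)
    as [eta [Heta Hmono]].
  exists (/ eta). intros t Ht s Hts.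
  assert (Ht0 : t > 0) by (pose proof (Rinv_0_lt_compat eta Heta); lra).
  specialize (Hmono (/ s) (/ t)). rewrite !Rinv_inv in Hmono. apply Hmono.
  - split; [apply Rinv_0_lt_compat; lra | apply Rinv_le_contravar; lra].
  - rewrite <- (Rinv_inv eta). apply Rinv_lt_contravar; [|lra].
    apply Rmult_lt_0_compat; [apply Rinv_0_lt_compat|]; lra.
Qed.

Lemma asymptotic_to_decreasing (g gamma1 : R -> R) :
  (forall t, t > 0 -> g t > 0) ->
  (forall s t, 0 < s -> s <= t -> gamma1 t <= gamma1 s) ->
  lim_infty (fun t => g t / gamma1 t) 1 ->
  almost_decreasing_at_infty g.
Proof.
  intros Hpos Hmono Hlim eps Heps.
  set (e := Rmin eps 1 / 4).
  assert (He : 0 < e <= 1/4 /\ e <= eps / 4).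
  { unfold e. pose proof (Rmin_l eps 1). pose proof (Rmin_r eps 1).
    assert (Rmin eps 1 > 0) by (apply Rmin_pos; lra). lra. }
  destruct (Hlim e ltac:(lra)) as [T HT].
  pose proof (Rmax_l T 0). pose proof (Rmax_r T 0). set (T1 := Rmax T 0) in *.
  assert (Hsandwich : forall t, t > T1 -> (1 - e) * gamma1 t < g t < (1 + e) * gamma1 t).
  { intros t Ht. specialize (HT t ltac:(lra)). apply Rabs_def2 in HT.
    pose proof (Hpos t ltac:(lra)).
    assert (Hgam : gamma1 t > 0).
    { destruct (Rtotal_order (gamma1 t) 0) as [Hneg|[Hz|Hp]]; [|rewrite Hz in HT|exact Hp].
      - assert (g t / gamma1 t < 0) by (apply Rdiv_pos_neg; lra). lra.
      - unfold Rdiv in HT. rewrite Rinv_0, Rmult_0_r in HT. lra. }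
    replace (g t) with (g t / gamma1 t * gamma1 t) by (field; lra). split; nra. }
  exists T1. intros t Ht s Hts.
  destruct (Hsandwich t ltac:(lra)) as [Ht1 Ht2]. destruct (Hsandwich s ltac:(lra)) as [Hs1 Hs2].
  assert (Hg : gamma1 s <= gamma1 t) by (apply Hmono; lra).
  assert (Hgt : gamma1 t > 0) by nra.
  assert (1 + e <= (1 + eps) * (1 - e)) by nra.
  nra.
Qed.

Lemma last_crossing (h : R -> R) (a b : R) : a < b ->
  (forall s, a <= s <= b -> limit1_in h (fun u => a <= u <= b) (h s) s) -> h b < 0 ->
  exists q, a <= q < b /\ (h q >= 0 \/ q = a) /\ forall s, q < s <= b -> h s < 0.
Proof.
  intros Hab Hcont Hhb.
  destruct (classic (exists s0, a <= s0 <= b /\ h s0 >= 0)) as [[s0 [Hs0 Hhs0]]|Hnone].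
  - destruct (completeness (fun s => a <= s <= b /\ h s >= 0)) as [q [Hub Hlub]].
    + exists b. intros s [Hs _]. lra.
    + exists s0. auto.
    + assert (Hq0 : s0 <= q) by (apply Hub; auto).
      assert (Hqb : q <= b) by (apply Hlub; intros s [Hs _]; lra).
      (* the supremum is attained, by continuity at [q] *)
      assert (Hhq : h q >= 0).
      { apply Rnot_lt_ge. intro Hneg.
        destruct (Hcont q ltac:(lra) (- h q) ltac:(lra)) as [d [Hd Hnear]].
        assert (q <= q - d / 2); [|lra].
        apply Hlub. intros s [Hs Hhs]. assert (s <= q) by (apply Hub; auto).
        apply Rnot_lt_le. intro Hclose.
        assert (Hdist : R_dist (h s) (h q) < - h q).
        { apply Hnear. split; [lra|]. unfold R_dist. apply Rabs_def1; lra. }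
        unfold R_dist in Hdist. apply Rabs_def2 in Hdist. lra. }
      exists q. split; [split; [lra|]|split; [left; exact Hhq|]].
      * destruct (Req_dec q b) as [->|]; lra.
      * intros s Hs. apply Rnot_le_lt. intro Hhs.
        assert (s <= q) by (apply Hub; split; lra). lra.
  - exists a. split; [lra|split; [right; reflexivity|]].
    intros s Hs. apply Rnot_le_lt. intro Hhs. apply Hnone. exists s. split; lra.
Qed.

Lemma below_on_left (h : R -> R) (s l : R) : derivable_pt_lim h s l -> l > 0 ->
  exists d, d > 0 /\ forall u, s - d < u < s -> h u < h s.
Proof.
  intros Hder Hl. destruct (Hder l Hl) as [[d Hd] Hquot].
  exists d. split; [exact Hd|]. intros u Hu.
  specialize (Hquot (u - s) ltac:(lra) ltac:(simpl; apply Rabs_def1; lra)).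
  replace (s + (u - s)) with u in Hquot by ring. apply Rabs_def2 in Hquot.
  assert (Hq : (h u - h s) / (u - s) > 0) by lra.
  destruct (Rle_lt_dec (h s) (h u)) as [Hge|]; [|assumption].
  assert ((h u - h s) / (u - s) <= 0); [|lra].
  assert (/ (u - s) < 0) by (apply Rinv_lt_0_compat; lra). unfold Rdiv. nra.
Qed.

(* The solution stays positive: at a first time [s] with [x s <= 0] we would have
   [x'(s) = - f (x s) + g s >= g s > 0], while [x > x s] just before [s]. *)
Lemma solution_positive (f g x : R -> R) (xi : R) :
  f 0 = 0 -> (forall u, u <> 0 -> u * f u > 0) -> (forall t, t > 0 -> g t > 0) ->
  xi > 0 -> continuous_on_nonneg x -> x 0 = xi ->
  (forall t, t > 0 -> derivable_pt_lim x t (- f (x t) + g t)) ->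
  forall t, t >= 0 -> x t > 0.
Proof.
  intros Hf0 Hfsign Hgpos Hxi Hxcont Hx0 Hode t1 Ht1. apply Rnot_le_gt. intro Hneg.
  assert (Ht1pos : t1 > 0) by (destruct (Req_dec t1 0) as [->|]; lra).
  (* the first such time is the last crossing of the time-reversed [u |-> - x (- u)] *)
  destruct (last_crossing (fun u => - x (- u)) (- t1) 0) as [q [Hq [Hqcross Hafter]]].
  - lra.
  - intros s Hs e He. destruct (Hxcont (- s) ltac:(lra) e He) as [d [Hd Hnear]].
    exists d. split; [exact Hd|]. intros u [Hu Hus]. simpl in *. unfold R_dist in *.
    replace (- x (- u) - - x (- s)) with (- (x (- u) - x (- s))) by ring.
    rewrite Rabs_Ropp. apply Hnear. split; [lra|].
    replace (- u - - s) with (- (u - s)) by ring. rewrite Rabs_Ropp. exact Hus.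
  - rewrite Ropp_0, Hx0. lra.
  - set (s := - q). assert (Hs : 0 < s <= t1) by (unfold s; lra).
    assert (Hxs : x s <= 0).
    { destruct Hqcross as [Hge | ->]; unfold s; [lra|rewrite Ropp_involutive; lra]. }
    assert (Hbefore : forall u, 0 <= u < s -> x u > 0).
    { intros u Hu. specialize (Hafter (- u) ltac:(unfold s in Hu; lra)).
      rewrite Ropp_involutive in Hafter. lra. }
    assert (Hfxs : f (x s) <= 0).
    { destruct (Req_dec (x s) 0) as [->|Hne]; [lra|].
      specialize (Hfsign (x s) Hne). nra. }
    destruct (below_on_left x s _ (Hode s ltac:(lra))) as [d [Hd Hleft]].
    { pose proof (Hgpos s ltac:(lra)). lra. }
    set (u := Rmax (s - d / 2) (s / 2)).
    assert (Hu : s - d < u < s /\ 0 <= u).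
    { unfold u, Rmax. destruct (Rle_dec (s - d / 2) (s / 2)); lra. }
    specialize (Hleft u ltac:(lra)). specialize (Hbefore u ltac:(lra)). lra.
Qed.

(* The numerical core of the lower bound (below), with [Fq, Fr] the values of [f (x _)]
   and [Gq, Gr] those of [g] at an earlier time [q] and a later time [r]. *)
Lemma undershoot_arith (e Fq Fr Gq Gr : R) : 0 < e <= 1/2 -> Gq > 0 ->
  Fq <= (1 + e/8) * Fr -> Gr <= (1 + e/8) * Gq -> (1 - e/2) * Gq <= Fq ->
  Fr < (1 - e) * Gr -> False.
Proof.
  intros He HGq H1 H2 H3 H4.
  assert (Fq < (1 + e/8) * ((1 - e) * Gr)) by nra.
  assert ((1 - e) * Gr <= (1 - e) * ((1 + e/8) * Gq)) by (apply Rmult_le_compat_l; lra).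
  assert ((1 + e/8) * ((1 + e/8) * (1 - e)) < 1 - e/2) by nra.
  nra.
Qed.

(* The numerical core of the upper bound; [GL] is the value of [g] at [L q >= r]. *)
Lemma overshoot_arith (e Fq Fr Gq Gr GL : R) : 0 < e <= 1/2 -> Gq > 0 -> Gr > 0 ->
  Fr <= (1 + e/16) * Fq -> GL <= (1 + e/16) * Gr -> (1 - e/8) * Gq <= GL ->
  Fq <= (1 + e/4) * Gq -> (1 + e) * Gr < Fr -> False.
Proof.
  intros He HGq HGr H1 H2 H3 H4 H5.
  assert ((1 + e) * Gr < (1 + e/16) * ((1 + e/4) * Gq)) by nra.
  assert ((1 - e/8) * Gq <= (1 + e/16) * Gr) by lra.
  assert ((1 + e) * ((1 - e/8) * Gq) <= (1 + e) * ((1 + e/16) * Gr))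
    by (apply Rmult_le_compat_l; lra).
  assert ((1 + e/16) * ((1 + e/16) * (1 + e/4)) < (1 + e) * (1 - e/8)) by nra.
  nra.
Qed.

Lemma scale_close_to_1 (theta d : R) : theta >= 0 -> d > 0 ->
  exists L, L > 1 /\ 1 - d <= Rpower L (- theta).
Proof.
  intros Hth Hd. set (s := d / (theta + 1)).
  assert (Hs : s > 0) by (unfold s; apply Rdiv_lt_0_compat; lra).
  exists (exp s). split.
  - pose proof (exp_ineq1 s ltac:(lra)). lra.
  - unfold Rpower. rewrite ln_exp. pose proof (exp_ineq1_le (- theta * s)).
    assert (theta * s <= d); [|lra].
    unfold s. apply (Rmult_le_reg_r (theta + 1)); [lra|].
    replace (theta * (d / (theta + 1)) * (theta + 1)) with (theta * d) by (field; lra). nra.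
Qed.

Section TimeFunction.
Variables (f F Finv : R -> R).
Hypothesis f_pos : forall u, u > 0 -> f u > 0.
Hypothesis F_deriv : forall u, u > 0 -> derivable_pt_lim F u (- / f u).
Hypothesis Finv_spec : forall t, t > 0 -> Finv t > 0 /\ F (Finv t) = t.

Lemma F_decreasing (u v : R) : 0 < u < v -> F v < F u.
Proof.
  intro Huv.
  assert (F v - F u < 0 * (v - u)); [|lra].
  apply (mvt_upper_bound F (fun w => - / f w)); [lra| |].
  - intros w Hw. apply F_deriv. lra.
  - intros w Hw. pose proof (Rinv_0_lt_compat _ (f_pos w ltac:(lra))). lra.
Qed.

Lemma le_Finv (u t : R) : u > 0 -> t > 0 -> t <= F u -> u <= Finv t.
Proof.
  intros Hu Ht HFu. destruct (Finv_spec t Ht) as [Hpos HFinv].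
  apply Rnot_lt_le. intro Hlt. pose proof (F_decreasing (Finv t) u ltac:(lra)). lra.
Qed.

Lemma F_nonneg (F_1 : F 1 = 0) (u : R) : 0 < u <= 1 -> F u >= 0.
Proof.
  intro Hu. destruct (Req_dec u 1) as [->|Hne]; [lra|].
  pose proof (F_decreasing u 1 ltac:(lra)). lra.
Qed.

Lemma Finv_to_0 (eta : R) : eta > 0 -> exists T, forall t, t > T -> Finv t < eta.
Proof.
  intro Heta. exists (Rmax 0 (F eta)). intros t Ht.
  pose proof (Rmax_l 0 (F eta)). pose proof (Rmax_r 0 (F eta)).
  apply Rnot_le_lt. intro Hle.
  destruct (Finv_spec t ltac:(lra)) as [_ HFinv].
  destruct (Req_dec (Finv t) eta) as [E|E]; [rewrite E in HFinv; lra|].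
  pose proof (F_decreasing eta (Finv t) ltac:(lra)). lra.
Qed.

End TimeFunction.

Section SolutionAsymptotics.
Variables (f g x : R -> R).
Hypothesis f_cont : continuity f.
Hypothesis f_pos : forall u, u > 0 -> f u > 0.
Hypothesis g_pos : forall t, t > 0 -> g t > 0.
Hypothesis g_cont : forall s, s > 0 -> continuity_pt g s.
Hypothesis x_pos : forall t, t >= 0 -> x t > 0.
Hypothesis x_ode : forall t, t > 0 -> derivable_pt_lim x t (- f (x t) + g t).
Hypothesis x_to_0 : lim_infty x 0.
Hypothesis f_almost : almost_increasing_at_0 f.
Hypothesis g_almost : almost_decreasing_at_infty g.

Lemma gap_continuous (al be a b : R) : a > 0 -> forall s, a <= s <= b ->
  limit1_in (fun s => al * g s + be * f (x s)) (fun u => a <= u <= b)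
            (al * g s + be * f (x s)) s.
Proof.
  intros Ha s Hs. apply (continuity_pt_limit1_in (fun s => al * g s + be * f (x s))).
  apply (continuity_pt_plus (mult_real_fct al g) (mult_real_fct be (comp f x)));
    apply continuity_pt_scal.
  - apply g_cont. lra.
  - apply continuity_pt_comp; [|apply f_cont].
    apply derivable_continuous_pt. exists (- f (x s) + g s). apply x_ode. lra.
Qed.

Lemma solution_increases (q r : R) : 0 < q < r ->
  (forall s, q < s < r -> f (x s) < g s) -> x q < x r.
Proof.
  intros Hqr Hbelow.
  assert (0 * (r - q) < x r - x q); [|lra].
  apply (mvt_lower_bound x (fun s => - f (x s) + g s)); [lra| |].
  - intros s Hs. apply x_ode. lra.
  - intros s Hs. specialize (Hbelow s Hs). lra.
Qed.

Lemma solution_decreases (q r : R) : 0 < q < r ->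
  (forall s, q < s < r -> g s < f (x s)) -> x r < x q.
Proof.
  intros Hqr Habove.
  assert (x r - x q < 0 * (r - q)); [|lra].
  apply (mvt_upper_bound x (fun s => - f (x s) + g s)); [lra| |].
  - intros s Hs. apply x_ode. lra.
  - intros s Hs. specialize (Habove s Hs). lra.
Qed.

(* At an undershoot time [r], go back
   to the last time [q] where [f (x q) >= (1 - e/2) g q]; the solution increased on [q, r],
   and near-monotonicity of [f] and [g] then contradicts the undershoot. *)
Lemma solution_lower_bound (e : R) : 0 < e <= 1/2 ->
  eventually (fun r => (1 - e) * g r <= f (x r)).
Proof.
  intro He.
  destruct (f_almost (e/8) ltac:(lra)) as [eta [Heta Hf_mono]].
  destruct (eventually_and _ _ (eventually_gt 0)
              (eventually_and _ _ (g_almost (e/8) ltac:(lra)) (x_to_0 eta Heta)))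
    as [T1 HT1].
  set (T0 := T1 + 1). assert (HT0 : T0 > T1) by (unfold T0; lra).
  destruct (HT1 T0 HT0) as [HT0pos _].
  destruct (eventually_and _ _ (eventually_gt T0) (x_to_0 (x T0) (x_pos T0 ltac:(lra))))
    as [T HT].
  exists T. intros r Hr. destruct (HT r Hr) as [HrT0 Hx_below].
  apply Rnot_lt_le. intro Hunder.
  destruct (last_crossing (fun s => - (1 - e/2) * g s + 1 * f (x s)) T0 r)
    as [q [Hq [Hcross Hafter]]].
  - exact HrT0.
  - apply gap_continuous. lra.
  - pose proof (g_pos r ltac:(lra)). cbv beta. nra.
  - assert (Hxqr : x q < x r).
    { apply solution_increases; [lra|]. intros s Hs. specialize (Hafter s ltac:(lra)).
      pose proof (g_pos s ltac:(lra)). cbv beta in Hafter. nra. }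
    rewrite Rminus_0_r in Hx_below. apply Rabs_def2 in Hx_below.
    destruct Hcross as [Hhq | ->]; [|lra].
    destruct (HT1 q ltac:(lra)) as [Hq0 [Hg_mono _]].
    destruct (HT1 r ltac:(lra)) as [_ [_ Hx_small]].
    rewrite Rminus_0_r in Hx_small. apply Rabs_def2 in Hx_small.
    pose proof (x_pos q ltac:(lra)).
    apply (undershoot_arith e (f (x q)) (f (x r)) (g q) (g r)); try lra.
    + apply g_pos. lra.
    + apply Hf_mono; lra.
    + apply Hg_mono. lra.
Qed.

Variables (F Finv : R -> R) (theta : R).
Hypothesis F_1 : F 1 = 0.
Hypothesis F_deriv : forall u, u > 0 -> derivable_pt_lim F u (- / f u).
Hypothesis Finv_spec : forall t, t > 0 -> Finv t > 0 /\ F (Finv t) = t.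
Hypothesis growth : lim_infty_pinf (fun t => g t / f (Finv t)).
Hypothesis theta_nonneg : theta >= 0.
Hypothesis g_RV : forall l, l > 0 -> lim_infty (fun t => g (l * t) / g t) (Rpower l (- theta)).

(* While [f (x)] exceeds [(1 + a) g], the time function [F (x)] grows at rate at least
   [a / (1 + a)], since [d/ds F (x s) = 1 - g s / f (x s)]. *)
Lemma F_grows_during_overshoot (a q r : R) : a > 0 -> 0 < q < r ->
  (forall s, q < s < r -> (1 + a) * g s < f (x s)) ->
  a / (1 + a) * (r - q) < F (x r) - F (x q).
Proof.
  intros Ha Hqr Habove.
  apply (mvt_lower_bound (comp F x) (fun s => - / f (x s) * (- f (x s) + g s))); [lra| |].
  - intros s Hs. apply derivable_pt_lim_comp; [apply x_ode; lra | apply F_deriv, x_pos; lra].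
  - intros s Hs. specialize (Habove s Hs).
    pose proof (g_pos s ltac:(lra)). pose proof (f_pos (x s) (x_pos s ltac:(lra))).
    replace (- / f (x s) * (- f (x s) + g s)) with ((f (x s) - g s) / f (x s)) by (field; lra).
    apply (Rmult_lt_reg_r ((1 + a) * f (x s))); [nra|].
    replace (a / (1 + a) * ((1 + a) * f (x s))) with (a * f (x s)) by (field; lra).
    replace ((f (x s) - g s) / f (x s) * ((1 + a) * f (x s)))
      with ((1 + a) * (f (x s) - g s)) by (field; lra).
    nra.
Qed.

(* An overshoot [f (x r) > (1 + e) g r] at a late time [r] is preceded by a long interval
   [(q, r]], with [L q <= r] for a fixed [L > 1], on which [f (x) > (1 + e/4) g]: at the
   last time [q] with [f (x q) <= (1 + e/4) g q], a ratio [r / q < L] would let the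
   near-monotonicity of [f] and [g] and the regular variation of [g] contradict the overshoot. *)
Lemma overshoot_interval (e : R) : 0 < e <= 1/2 -> exists L T0, L > 1 /\ T0 > 0 /\
  forall r, r > L * T0 -> (1 + e) * g r < f (x r) ->
  exists q, T0 <= q /\ L * q <= r /\ x q < 1 /\
    forall s, q < s < r -> (1 + e/4) * g s < f (x s).
Proof.
  intro He.
  destruct (scale_close_to_1 theta (e/16) theta_nonneg ltac:(lra)) as [L [HL HLtheta]].
  destruct (f_almost (e/16) ltac:(lra)) as [eta [Heta Hf_mono]].
  destruct (eventually_and _ _ (eventually_gt 0)
             (eventually_and _ _ (g_almost (e/16) ltac:(lra))
               (eventually_and _ _ (g_RV L ltac:(lra) (e/16) ltac:(lra))
                 (x_to_0 (Rmin eta 1) ltac:(apply Rmin_pos; lra))))) as [T1 HT1].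
  pose proof (Rmin_l eta 1). pose proof (Rmin_r eta 1).
  exists L, (T1 + 1). destruct (HT1 (T1 + 1) ltac:(lra)) as [HT0 _].
  split; [exact HL|]. split; [exact HT0|]. intros r Hr Hover.
  destruct (last_crossing (fun s => (1 + e/4) * g s + (-1) * f (x s)) (T1 + 1) r)
    as [q [Hq [Hcross Hafter]]].
  - nra.
  - apply gap_continuous. lra.
  - pose proof (g_pos r ltac:(nra)). cbv beta. nra.
  - destruct (HT1 q ltac:(lra)) as [Hq0 [_ [Hg_L Hxq]]].
    destruct (HT1 r ltac:(lra)) as [_ [Hg_mono _]].
    rewrite Rminus_0_r in Hxq. apply Rabs_def2 in Hxq.
    assert (Habove : forall s, q < s < r -> (1 + e/4) * g s < f (x s)).
    { intros s Hs. specialize (Hafter s ltac:(lra)). cbv beta in Hafter. lra. }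
    exists q. split; [lra|]. split; [|split; [lra|exact Habove]].
    destruct Hcross as [Hhq | ->]; [|lra].
    apply Rnot_lt_le. intro Hlate.
    assert (Hxr : x r < x q).
    { apply solution_decreases; [lra|]. intros s Hs. specialize (Habove s Hs).
      pose proof (g_pos s ltac:(lra)). nra. }
    apply Rabs_def2 in Hg_L. cbv beta in Hhq.
    pose proof (g_pos q Hq0). pose proof (x_pos r ltac:(lra)).
    apply (overshoot_arith e (f (x q)) (f (x r)) (g q) (g r) (g (L * q))); try lra.
    + apply g_pos. lra.
    + apply Hf_mono; lra.
    + apply Hg_mono. lra.
    + replace (g (L * q)) with (g (L * q) / g q * g q) by (field; lra). nra.
Qed.

(* During the long overshoot interval
   [F (x)] grows linearly, so [x r <= F^{-1} (k r)]; the growth hypothesis on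
   [g / f (F^{-1})] and the regular variation of [g] then make [f (x r)] small. *)
Lemma solution_upper_bound (e : R) : 0 < e <= 1/2 ->
  eventually (fun r => f (x r) <= (1 + e) * g r).
Proof.
  intro He. destruct (overshoot_interval e He) as [L [T0 [HL [HT0 Hinterval]]]].
  assert (HiL : 0 < / L < 1).
  { split; [apply Rinv_0_lt_compat; lra|]. rewrite <- Rinv_1. apply Rinv_lt_contravar; lra. }
  set (c := e/4 / (1 + e/4)). assert (Hc : c > 0) by (unfold c; apply Rdiv_lt_0_compat; lra).
  set (k := c * (1 - / L)). assert (Hk : k > 0) by (unfold k; apply Rmult_lt_0_compat; lra).
  set (P := Rpower k (- theta)). assert (HP : P > 0) by apply exp_pos.
  destruct (f_almost (e/16) ltac:(lra)) as [eta [Heta Hf_mono]].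
  destruct (eventually_and _ _ (eventually_gt (L * T0))
             (eventually_and _ _ (g_RV k Hk 1 ltac:(lra))
               (eventually_and _ _ (eventually_scale k _ Hk (growth (2 * (P + 1))))
                 (eventually_scale k _ Hk
                   (Finv_to_0 f F Finv f_pos F_deriv Finv_spec eta Heta))))) as [T HT].
  exists T. intros r Hr. destruct (HT r Hr) as [HrL [Hg_k [Hgrowth HFinv_small]]].
  assert (Hr0 : r > 0) by nra.
  apply Rnot_lt_le. intro Hover.
  destruct (Hinterval r HrL Hover) as [q [Hq [HLq [Hxq1 Habove]]]].
  (* [F (x r) > k r]: linear growth of [F (x)] on [(q, r)], with [F (x q) >= 0] *)
  assert (HF : k * r < F (x r)).
  { pose proof (F_grows_during_overshoot (e/4) q r ltac:(lra) ltac:(nra) Habove) as Hgrow.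
    fold c in Hgrow.
    pose proof (F_nonneg f F f_pos F_deriv F_1 (x q) ltac:(split; [apply x_pos|]; lra)).
    assert (Hlong : (1 - / L) * r <= r - q).
    { assert (q <= / L * r); [|nra].
      apply (Rmult_le_reg_l L); [lra|]. rewrite <- Rmult_assoc, Rinv_r, Rmult_1_l; lra. }
    unfold k. nra. }
  pose proof (le_Finv f F Finv f_pos F_deriv Finv_spec (x r) (k * r)
                (x_pos r ltac:(lra)) ltac:(nra) ltac:(lra)) as Hx_Finv.
  destruct (Finv_spec (k * r) ltac:(nra)) as [HFinv_pos _].
  apply Rabs_def2 in Hg_k.
  pose proof (Hf_mono (x r) (Finv (k * r)) ltac:(split; [apply x_pos|]; lra) HFinv_small).
  pose proof (f_pos (Finv (k * r)) HFinv_pos). pose proof (g_pos r Hr0).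
  (* [2 (P + 1) f (F^{-1} (k r)) < g (k r) < (P + 1) g r] *)
  assert (Hsmall : 2 * (P + 1) * f (Finv (k * r)) < g (k * r)).
  { replace (g (k * r)) with (g (k * r) / f (Finv (k * r)) * f (Finv (k * r)))
      by (field; lra). nra. }
  assert (Hgk : g (k * r) < (P + 1) * g r).
  { replace (g (k * r)) with (g (k * r) / g r * g r) by (field; lra). fold P in Hg_k. nra. }
  assert (Hhalf : 2 * f (Finv (k * r)) < g r) by (apply (Rmult_lt_reg_l (P + 1)); lra).
  nra.
Qed.

Lemma solution_ratio_limit : lim_infty (fun t => f (x t) / g t) 1.
Proof.
  intros eps Heps.
  set (e := Rmin eps (1/2)).
  assert (He : 0 < e <= 1/2 /\ e <= eps).
  { unfold e. split; [split|]; [apply Rmin_pos; lra | apply Rmin_r | apply Rmin_l]. }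
  destruct (eventually_and _ _ (eventually_gt 0)
             (eventually_and _ _ (solution_lower_bound (e/2) ltac:(lra))
                                 (solution_upper_bound (e/2) ltac:(lra)))) as [T HT].
  exists T. intros t Ht. destruct (HT t Ht) as [Ht0 [Hlow Hup]].
  pose proof (g_pos t Ht0). pose proof (Rinv_0_lt_compat (g t) (g_pos t Ht0)).
  assert (Hratio : 1 - e/2 <= f (x t) / g t <= 1 + e/2).
  { unfold Rdiv. split; apply (Rmult_le_reg_r (g t)); try lra;
      rewrite Rmult_assoc, Rinv_l, Rmult_1_r by lra; lra. }
  apply Rabs_def1; lra.
Qed.

End SolutionAsymptotics.

Theorem theorem4
  (f g : R -> R) (xi : R) (F Finv : R -> R) (x : R -> R) (beta theta : R)
  (* standing assumptions on f *)
  (Hf_cont : continuity f)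
  (Hf_lip : locally_lipschitz f)
  (Hf0 : f 0 = 0)
  (Hf_sign : forall u : R, u <> 0 -> u * f u > 0)
  (* standing assumptions on g and xi *)
  (Hg_cont : continuous_on_nonneg g)
  (Hg_pos : forall t : R, t > 0 -> g t > 0)
  (Hxi : xi > 0)
  (* F(u) = int_u^1 dv / f(v) for u > 0 *)
  (HF1 : F 1 = 0)
  (HF_deriv : forall u : R, u > 0 -> derivable_pt_lim F u (- / f u))
  (HF_inf : lim_0plus_pinf F)
  (* F^{-1}: inverse of F on its range, which contains (0, +oo) *)
  (HFinv : forall t : R, t > 0 -> Finv t > 0 /\ F (Finv t) = t)
  (* x solves x' = -f(x) + g, x(0) = xi, continuous on [0,oo) *)
  (Hx_cont : continuous_on_nonneg x)
  (Hx0 : x 0 = xi)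
  (Hx_ode : forall t : R, t > 0 -> derivable_pt_lim x t (- f (x t) + g t))
  (* hypotheses of the theorem *)
  (Hgrowth : lim_infty_pinf (fun t => g t / f (Finv t)))
  (Hbeta : beta > 1)
  (HfRV : RV0 f beta)
  (Htheta : theta >= 0)
  (HgRV : RVinf g (- theta))
  (Hx_lim : lim_infty x 0) :
  (theta > 0 -> lim_infty (fun t => f (x t) / g t) 1) /\
  (theta = 0 ->
     (exists gamma1 : R -> R,
        (forall s t : R, 0 < s -> s <= t -> gamma1 t <= gamma1 s) /\
        lim_infty (fun t => g t / gamma1 t) 1) ->
     lim_infty (fun t => f (x t) / g t) 1).
Proof.
  assert (f_pos : forall u, u > 0 -> f u > 0).
  { intros u Hu. specialize (Hf_sign u ltac:(lra)). nra. }
  pose proof (continuous_on_nonneg_pt g Hg_cont) as g_cont.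
  (* only the near-monotonicity of g differs between the two cases *)
  assert (ratio_limit : almost_decreasing_at_infty g ->
                        lim_infty (fun t => f (x t) / g t) 1).
  { intro g_almost.
    exact (solution_ratio_limit f g x Hf_cont f_pos Hg_pos g_cont
             (solution_positive f g x xi Hf0 Hf_sign Hg_pos Hxi Hx_cont Hx0 Hx_ode)
             Hx_ode Hx_lim
             (RV0_almost_increasing f beta HfRV (fun u _ => Hf_cont u) ltac:(lra))
             g_almost F Finv theta HF1 HF_deriv HFinv Hgrowth Htheta (proj2 HgRV)). }
  split.
  - intro Hth. apply ratio_limit. exact (RVinf_almost_decreasing g theta Hth HgRV g_cont).
  - intros _ [gamma1 [Hdecr Hasym]]. apply ratio_limit.
    exact (asymptotic_to_decreasing g gamma1 Hg_pos Hdecr Hasym).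
Qed.
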